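(* Let $E=\{1,2,\ldots,D\}$ be a finite state space and let $(J_n,T_n)_{n\in\mathbb{N}}$ be random variables on a probability space $(\Omega,\mathcal{F},\mathbb{P})$ with $J_n\in E$, $T_n\in\mathbb{N}$, $T_0=0$, $T_n<T_{n+1}$, and age index $A_n=a+T_n$ for a fixed initial age $a$. Assume that $(J_n,T_n,A_n)$ is a non-homogeneous age-indexed Markov renewal process, i.e. the conditional distribution of $(J_{n+1},T_{n+1})$ given the whole past $\sigma(J_h,T_h,A_h,\ h\le n)$ depends only on $(J_n,T_n,A_n)$, through the kernel $$ {}^{b}Q_{ij}(s;t)=\mathbb{P}[J_{n+1}=j,\,T_{n+1}\le t\mid J_n=i,\,T_n=s,\,A_n=b],\qquad b=a+s. $$ Put ${}^{b}q_{ij}(s;t)={}^{b}Q_{ij}(s;t)-{}^{b}Q_{ij}(s;t-1)$ for $t>s$ and ${}^{b}q_{ij}(s;s)=0$, and ${}^{b}\overline{H}_i(s;t)=1-\sum_{j\in E}{}^{b}Q_{ij}(s;t)$. Let $N(t)=\sup\{n:T_n\le t\}$, $Z(t)=J_{N(t)}$, $B(t)=t-T_{N(t)}$, and for integers $0\le u\le s\le t$, $u'\ge 0$, $i,j\in E$ define $$ {}^{a+s-u}\phi_{ij}(u,s;u',t)=\mathbb{P}\big[Z(t)=j,\,B(t)=u'\mid Z(s)=i,\,B(s)=u,\,A_{N(s)}=a+T_{N(s)}\big] $$ (whenever ${}^{a+s-u}\overline{H}_i(s-u;s)>0$). Then $$ {}^{a+s-u}\phi_{ij}(u,s;u',t)=1_{\{i=j\}}1_{\{u'=t-s+u\}}\frac{{}^{a+s-u}\overline{H}_i(s-u;t)}{{}^{a+s-u}\overline{H}_i(s-u;s)}+\sum_{k\in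 E}\sum_{\theta=s+1}^{t-u'}\frac{{}^{a+s-u}q_{ik}(s-u;\theta)}{{}^{a+s-u}\overline{H}_i(s-u;s)}\;{}^{a+\theta}\phi_{kj}(0,\theta;u',t). $$
   Context: Here $J_n$ is the (health) state entered at the $n$-th transition and $T_n$ its time; $Z(t)$ is the age-indexed semi-Markov chain, $B(t)$ the backward recurrence time (time elapsed since the last transition), and the left superscript on $Q$, $q$, $\overline{H}$, $\phi$ denotes the age of the individual at the time of the last transition (entrance into the current state). Thus ${}^{b}q_{ij}(s;t)=\mathbb{P}[J_{n+1}=j,T_{n+1}=t\mid J_n=i,T_n=s,A_n=b]$ and ${}^{b}\overline{H}_i(s;t)=\mathbb{P}[T_{n+1}>t\mid J_n=i,T_n=s,A_n=b]$ with $b=a+s$. *)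

From HB Require Import structures.
From mathcomp Require Import all_boot all_order all_algebra.
From mathcomp Require Import all_classical all_reals all_analysis.
Set Implicit Arguments. Unset Strict Implicit. Unset Printing Implicit Defensive.
Import Order.TTheory GRing.Theory Num.Theory.
Local Open Scope classical_set_scope.
Local Open Scope ring_scope.

(* E = {1,...,D} is represented by 'I_D (states relabelled 0..D-1). *)

Definition Pr (R : realType) (d : measure_display) (Omega : measurableType d)
  (P : probability Omega R) (A : set Omega) : R := fine (P A).

(** N(t) = sup {n | T_n <= t}.  Since T_0 = 0 and T is strictly increasing in
    nat, T_n >= n, so the sup is attained among n <= t. *)
Definition Ncount (d : measure_display) (Omega : measurableType d)
  (T : nat -> Omega -> nat) (t : nat) (w : Omega) : nat :=
  (\max_(n < t.+1 | (T n w <= t)%N) (n : nat))%N.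

Definition Zproc (d : measure_display) (Omega : measurableType d) (D : nat)
  (J : nat -> Omega -> 'I_D) (T : nat -> Omega -> nat) (t : nat) (w : Omega) : 'I_D :=
  J (Ncount T t w) w.

Definition Bproc (d : measure_display) (Omega : measurableType d)
  (T : nat -> Omega -> nat) (t : nat) (w : Omega) : nat :=
  (t - T (Ncount T t w) w)%N.

Definition Aproc (d : measure_display) (Omega : measurableType d)
  (a : nat) (T : nat -> Omega -> nat) (n : nat) (w : Omega) : nat :=
  (a + T n w)%N.

(** Stated multiplicatively (P[H /\ F] = Q * P[H]) for every history H. *)
Definition is_age_MRP (R : realType) (d : measure_display) (Omega : measurableType d)
  (P : probability Omega R) (D : nat) (J : nat -> Omega -> 'I_D)
  (T : nat -> Omega -> nat) (a : nat)
  (Q : nat -> 'I_D -> 'I_D -> nat -> nat -> R) : Prop :=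
  forall (n : nat) (js : nat -> 'I_D) (ts : nat -> nat) (j : 'I_D) (t : nat),
    let H := [set w | forall h, (h <= n)%N ->
                J h w = js h /\ T h w = ts h /\ Aproc a T h w = (a + ts h)%N] in
    Pr P (H `&` [set w | J n.+1 w = j /\ (T n.+1 w <= t)%N])
      = Q (a + ts n)%N (js n) j (ts n) t * Pr P H.

Definition qker (R : realType) (D : nat) (Q : nat -> 'I_D -> 'I_D -> nat -> nat -> R)
  (b : nat) (i j : 'I_D) (s t : nat) : R :=
  if (s < t)%N then Q b i j s t - Q b i j s t.-1 else 0.

Definition Hbar (R : realType) (D : nat) (Q : nat -> 'I_D -> 'I_D -> nat -> nat -> R)
  (b : nat) (i : 'I_D) (s t : nat) : R :=
  1 - \sum_(j < D) Q b i j s t.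

Definition condev (d : measure_display) (Omega : measurableType d) (D : nat)
  (J : nat -> Omega -> 'I_D) (T : nat -> Omega -> nat) (a : nat)
  (i : 'I_D) (s u : nat) : set Omega :=
  [set w | Zproc J T s w = i /\ Bproc T s w = u
           /\ Aproc a T (Ncount T s w) w = (a + T (Ncount T s w) w)%N].

(** phi_{ij}(u,s;u',t) = P[Z(t)=j, B(t)=u' | Z(s)=i, B(s)=u, A_{N(s)}=a+T_{N(s)}]
    (elementary conditional probability; the age superscript a+s-u is
    determined by a, s, u).  Division by 0 yields 0 (MathComp convention). *)
Definition phi (R : realType) (d : measure_display) (Omega : measurableType d)
  (P : probability Omega R) (D : nat) (J : nat -> Omega -> 'I_D)
  (T : nat -> Omega -> nat) (a : nat) (i j : 'I_D) (u s u' t : nat) : R :=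
  Pr P ([set w | Zproc J T t w = j /\ Bproc T t w = u'] `&` condev J T a i s u)
  / Pr P (condev J T a i s u).

From HB Require Import structures.
From mathcomp Require Import all_boot all_order all_algebra.
From mathcomp Require Import all_classical all_reals all_analysis.
From mathcomp Require Import zify.
Set Implicit Arguments.
Unset Strict Implicit.
Unset Printing Implicit Defensive.
Import Order.TTheory GRing.Theory Num.Theory.
Local Open Scope classical_set_scope.
Local Open Scope ring_scope.

(* Call a history the values of (J_h, T_h) for h <= m.  By the Markov renewal
   property, given a history ending in state k at time T_m, the next
   transition has kernel q and the sojourn in k exceeds x with probability
   Hbar(x).  Let F = {Z(t) = j, B(t) = u'}.  By backward induction on th <= t,
   P(history & F) = phi_kj(0, th; u', t) P(history) for every history ending
   in k at time th: either T_{m+1} > t, and then Z(t) = k and B(t) = t - th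
   are known, or the chain jumps to some k' at some th' in (th, t], where the
   extended history ends at th' and the induction hypothesis applies.  The
   event {Z(s) = i, B(s) = u} is the disjoint union over n of
   {J_n = i, T_n = s - u, T_{n+1} > s}, itself a union of histories, so the
   same first-step decomposition computes the numerator and the denominator
   of phi.  The terms with th' > t - u' vanish because then B(t) < u'. *)

Section Probability.
Variables (R : realType) (d : measure_display) (Omega : measurableType d).
Variable P : probability Omega R.

Lemma Pr_ge0 (A : set Omega) : 0 <= Pr P A.
Proof. exact/fine_ge0/measure_ge0. Qed.

Lemma Pr_set0 : Pr P set0 = 0.
Proof. by rewrite /Pr measure0. Qed.

Lemma Pr_setU (A B : set Omega) : measurable A -> measurable B ->
  A `&` B = set0 -> Pr P (A `|` B) = Pr P A + Pr P B.
Proof. by move=> mA mB AB; rewrite /Pr measureU // fineD // fin_num_measure. Qed.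

Lemma le_Pr (A B : set Omega) : measurable A -> measurable B -> A `<=` B ->
  Pr P A <= Pr P B.
Proof.
move=> mA mB AB; rewrite /Pr fine_le ?fin_num_measure //.
by rewrite le_measure ?inE.
Qed.

Lemma Pr_partition (I : choiceType) (s : seq I) (F : I -> set Omega) (A : set Omega) :
  uniq s -> (forall i, i \in s -> measurable (F i)) ->
  (forall i k w, i \in s -> k \in s -> F i w -> F k w -> i = k) ->
  A = \bigcup_(i in [set` s]) F i ->
  Pr P A = \sum_(i <- s) Pr P (F i).
Proof.
move=> + + + ->; rewrite bigcup_seq.
elim: s => [|x s IH] /=; first by rewrite !big_nil Pr_set0.
move=> /andP[xs us] mF dF; have ms i : i \in s -> i \in x :: s by rewrite inE => ->; rewrite orbT.
rewrite !big_cons Pr_setU; first (congr (_ + _); apply: IH) => //.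
- by move=> i /ms /mF.
- by move=> i k w /ms si /ms sk; apply: dF.
- by apply: mF; rewrite mem_head.
- by rewrite big_seq; apply: bigsetU_measurable => i /ms /mF.
apply/seteqP; split => w // [Fxw]; rewrite -bigcup_seq => -[i si Fiw].
by move: xs; rewrite (dF x i w (mem_head _ _) (ms _ si) Fxw Fiw) si.
Qed.

End Probability.

Section RenewalProcess.
Variables (d : measure_display) (Omega : measurableType d) (D : nat).
Variables (J : nat -> Omega -> 'I_D) (T : nat -> Omega -> nat).
Hypothesis mJ : forall (n : nat) (j : 'I_D), measurable (J n @^-1` [set j]).
Hypothesis mT : forall (n t : nat), measurable (T n @^-1` [set t]).
Hypothesis T0 : forall w, T 0%N w = 0%N.
Hypothesis Tinc : forall (n : nat) w, (T n w < T n.+1 w)%N.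

Lemma T_leq w : {homo T^~ w : m n / (m <= n)%N}.
Proof. exact: homo_leq leqnn leq_trans (fun n => ltnW (Tinc n w)). Qed.

Lemma T_ge_index n w : (n <= T n w)%N.
Proof. by elim: n => [|n IH] //; apply: leq_ltn_trans IH (Tinc n w). Qed.

Lemma Ncount_ge t w n : (T n w <= t)%N -> (n <= Ncount T t w)%N.
Proof.
move=> Tnt; have nt : (n < t.+1)%N by rewrite ltnS (leq_trans (T_ge_index n w)).
exact: (@leq_bigmax_cond _ (fun i : 'I_t.+1 => (T i w <= t)%N) val (Ordinal nt)).
Qed.

Lemma T_Ncount_le t w : (T (Ncount T t w) w <= t)%N.
Proof.
have : (0 < #|(fun i : 'I_t.+1 => (T i w <= t)%N)|)%N.
  by apply/card_gt0P; exists ord0; rewrite /in_mem /= T0.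
by move=> /(eq_bigmax_cond val) [i0 + E]; rewrite /Ncount E.
Qed.

Lemma T_Ncount_gt t w : (t < T (Ncount T t w).+1 w)%N.
Proof. by rewrite ltnNge; apply/negP => /Ncount_ge; rewrite ltnn. Qed.

Lemma Ncount_le t w : (Ncount T t w <= t)%N.
Proof. exact: leq_trans (T_ge_index _ w) (T_Ncount_le t w). Qed.

Lemma Ncount_eq t w n : (T n w <= t)%N -> (t < T n.+1 w)%N -> Ncount T t w = n.
Proof.
move=> Tnt tTn; apply/eqP; rewrite eqn_leq Ncount_ge // andbT leqNgt.
apply/negP => /(T_leq w); have := T_Ncount_le t w; lia.
Qed.

Definition agree (N : nat) (w w' : Omega) : Prop :=
  forall h, (h < N)%N -> J h w = J h w' /\ T h w = T h w'.

Lemma measurable_agree (N : nat) (S : set Omega) :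
  (forall w w', agree N w w' -> S w -> S w') -> measurable S.
Proof.
move=> agreeS.
pose hist w : {ffun 'I_N -> 'I_D * nat} := [ffun h : 'I_N => (J h w, T h w)].
have hist_agree w w' : hist w = hist w' -> agree N w w'.
  by move=> /ffunP E h hN; have := E (Ordinal hN); rewrite !ffunE => -[-> ->].
have mfiber g : measurable (hist @^-1` [set g]).
  suff -> : hist @^-1` [set g] =
      \big[setI/setT]_(h <- enum 'I_N) (J h @^-1` [set (g h).1] `&` T h @^-1` [set (g h).2]).
    by apply: bigsetI_measurable => h _; apply: measurableI; [apply: mJ | apply: mT].
  rewrite -bigcap_seq; apply/seteqP; split => w /=.
    by move=> <- h _; rewrite ffunE.
  move=> Hw; apply/ffunP => h; rewrite ffunE.
  by have [/= -> ->] := Hw h (mem_enum _ h); case: (g h).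
have -> : S = \bigcup_g (hist @^-1` [set g] `&` S).
  by apply/seteqP; split => [w Sw|w [g _ []]//]; exists (hist w).
apply: countable_bigcupT_measurable => // g.
have [[w [Sw <-]]|nS] := pselect (exists w, S w /\ hist w = g).
  suff -> : hist @^-1` [set hist w] `&` S = hist @^-1` [set hist w] by [].
  apply/seteqP; split => [w' []//|w' /= E]; split => //.
  exact: agreeS (hist_agree _ _ (esym E)) Sw.
suff -> : hist @^-1` [set g] `&` S = set0 by [].
by apply/seteqP; split => // w [Hw Sw]; apply: nS; exists w.
Qed.

Lemma measurable_at n (S : set Omega) :
  (forall w w', J n w = J n w' -> T n w = T n w' -> S w -> S w') -> measurable S.
Proof.
by move=> HS; apply: (@measurable_agree n.+1) => w w' /(_ n (ltnSn n)) []; apply: HS.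
Qed.

Lemma Ncount_agree t w w' : agree t.+1 w w' -> Ncount T t w = Ncount T t w'.
Proof. by move=> Hww'; apply: eq_bigl => i; rewrite (Hww' i _).2. Qed.

Lemma ZB_agree t w w' : agree t.+1 w w' ->
  Zproc J T t w = Zproc J T t w' /\ Bproc T t w = Bproc T t w'.
Proof.
move=> Hww'; rewrite /Zproc /Bproc -(Ncount_agree Hww').
by have [-> ->] := Hww' _ (Ncount_le t w : (_ < t.+1)%N).
Qed.

Lemma measurable_ZB t j u : measurable [set w | Zproc J T t w = j /\ Bproc T t w = u].
Proof.
by apply: (@measurable_agree t.+1) => w w' /ZB_agree [Z_eq B_eq]; rewrite /= -Z_eq -B_eq.
Qed.

Lemma condevE a i s u :
  condev J T a i s u = [set w | Zproc J T s w = i /\ Bproc T s w = u].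
Proof.
rewrite /condev; apply/seteqP; split => w /=; first by case=> -> [->].
by case=> -> ->.
Qed.

Definition entrance (n : nat) (k : 'I_D) (th : nat) : set Omega :=
  [set w | J n w = k /\ T n w = th].

Lemma measurable_entrance n k th : measurable (entrance n k th).
Proof. by apply: (@measurable_at n) => w w'; rewrite /entrance /= => -> ->. Qed.

Definition history (m : nat) (js : nat -> 'I_D) (ts : nat -> nat) : set Omega :=
  [set w | forall h, (h <= m)%N -> J h w = js h /\ T h w = ts h].

Lemma measurable_history m js ts : measurable (history m js ts).
Proof.
apply: (@measurable_agree m.+1) => w w' Hww' Hw h hm.
by have [<- <-] := Hww' h hm; apply: Hw.
Qed.

Lemma history_ZB m js ts t w : history m js ts w -> (ts m <= t)%N -> (t < T m.+1 w)%N ->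
  Zproc J T t w = js m /\ Bproc T t w = (t - ts m)%N.
Proof.
move=> /(_ m (leqnn m)) [Jm Tm] tsm tT.
by rewrite /Zproc /Bproc (Ncount_eq (_ : T m w <= t)%N tT) ?Jm ?Tm.
Qed.

Lemma history_extend n js ts k th :
  history n js ts `&` entrance n.+1 k th
  = history n.+1 [eta js with n.+1 |-> k] [eta ts with n.+1 |-> th].
Proof.
apply/seteqP; split => w /=.
  move=> [Hw [Jk Tth]] h; rewrite leq_eqVlt => /orP[/eqP->|hn] /=.
    by rewrite eqxx.
  by rewrite (ltn_eqF hn); apply: Hw.
move=> Hw; split; last by have := Hw n.+1 (leqnn _); rewrite /= eqxx.
by move=> h hn; have := Hw h (leqW hn); rewrite /= (ltn_eqF (hn : (h < n.+1)%N)).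
Qed.

Lemma history_after m js ts (Y : set Omega) :
  history m js ts `&` ([set w | (ts m < T m.+1 w)%N] `&` Y) = history m js ts `&` Y.
Proof.
rewrite setIA; congr (_ `&` _); apply/setIidl => w Hw /=.
by have [_ <-] := Hw m (leqnn m); apply: Tinc.
Qed.

Lemma history_sub_condev a m js ts :
  history m js ts `<=` condev J T a (js m) (ts m) 0.
Proof.
move=> w Hw; rewrite condevE /= -(subnn (ts m)); apply: (history_ZB Hw) => //.
by have [_ <-] := Hw m (leqnn m); apply: Tinc.
Qed.

Section MarkovRenewal.
Variables (R : realType) (P : probability Omega R).
Variables (a : nat) (Q : nat -> 'I_D -> 'I_D -> nat -> nat -> R).
Hypothesis hMRP : is_age_MRP P J T a Q.

Lemma Pr_history_next n js ts k x :
  Pr P (history n js ts `&` [set w | J n.+1 w = k /\ (T n.+1 w <= x)%N])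
  = Q (a + ts n) (js n) k (ts n) x * Pr P (history n js ts).
Proof.
suff -> : history n js ts = [set w | forall h, (h <= n)%N ->
    J h w = js h /\ T h w = ts h /\ Aproc a T h w = (a + ts h)%N] by apply: hMRP.
apply/seteqP; split => w Hw h /Hw; rewrite /Aproc; first by case=> -> ->.
by case=> -> [->].
Qed.

Lemma Pr_history_survive n js ts x :
  Pr P (history n js ts `&` [set w | (x < T n.+1 w)%N])
  = Hbar Q (a + ts n) (js n) (ts n) x * Pr P (history n js ts).
Proof.
set H := history n js ts; have mH : measurable H := measurable_history n js ts.
have mH_le : measurable (H `&` [set w | (T n.+1 w <= x)%N]).
  by apply: measurableI => //; apply: (@measurable_at n.+1) => w w' /= _ ->.
have mH_gt : measurable (H `&` [set w | (x < T n.+1 w)%N]).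
  by apply: measurableI => //; apply: (@measurable_at n.+1) => w w' /= _ ->.
have split_H : Pr P H = Pr P (H `&` [set w | (T n.+1 w <= x)%N])
                        + Pr P (H `&` [set w | (x < T n.+1 w)%N]).
  rewrite -Pr_setU //; last first.
    by apply/seteqP; split => w // [[_ /= le] [_ /=]]; rewrite ltnNge le.
  rewrite -setIUr (_ : _ `|` _ = setT) ?setIT //.
  by apply/seteqP; split => w // _; rewrite /= leqNgt; apply/orP/orNb.
have jumped : Pr P (H `&` [set w | (T n.+1 w <= x)%N])
              = (\sum_(k < D) Q (a + ts n) (js n) k (ts n) x) * Pr P H.
  rewrite mulr_suml -(eq_bigr _ (fun k _ => Pr_history_next n js ts k x)).
  apply: Pr_partition.
  - exact: index_enum_uniq.
  - move=> k _; apply: measurableI => //.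
    by apply: (@measurable_at n.+1) => w w' /= -> ->.
  - by move=> k k' w _ _ [_ [<- _]] [_ [<- _]].
  apply/seteqP; split => w /=; last by case=> k _ [Hw [_ le]].
  by move=> [Hw le]; exists (J n.+1 w); rewrite /= ?mem_index_enum.
by rewrite /Hbar mulrBl mul1r -jumped split_H addrC addKr.
Qed.

Lemma Pr_history_jump n js ts k th : (ts n < th)%N ->
  Pr P (history n js ts `&` entrance n.+1 k th)
  = qker Q (a + ts n) (js n) k (ts n) th * Pr P (history n js ts).
Proof.
case: th => // th tsth; rewrite /qker tsth /= mulrBl -!Pr_history_next.
set H := history n js ts; have mH : measurable H := measurable_history n js ts.
have split_le : H `&` [set w | J n.+1 w = k /\ (T n.+1 w <= th.+1)%N]
    = (H `&` [set w | J n.+1 w = k /\ (T n.+1 w <= th)%N]) `|` (H `&` entrance n.+1 k th.+1).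
  rewrite -setIUr; congr (_ `&` _); apply/seteqP; split => w /=.
    by case=> Jk; rewrite leq_eqVlt ltnS => /orP[/eqP E|le]; [right|left].
  case=> -[-> le]; split => //; first exact: leqW.
  by rewrite le.
rewrite split_le Pr_setU; first by rewrite addrC addKr.
- by apply: measurableI => //; apply: (@measurable_at n.+1) => w w' /= -> ->.
- exact/measurableI/measurable_entrance.
by apply/seteqP; split => w // [[_ [_ le]] [_ [_ /= eq]]]; move: le; rewrite eq ltnn.
Qed.

Lemma Pr_entrance_factor n k th (X : set Omega) (c : R) : measurable X ->
  (forall js ts, js n = k -> ts n = th ->
     Pr P (history n js ts `&` X) = c * Pr P (history n js ts)) ->
  Pr P (entrance n k th `&` X) = c * Pr P (entrance n k th).
Proof.
move=> mX Hc.
(* On entrance n k th every T_h with h <= n is at most th: finitely many histories. *)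
pose hist_of (g : {ffun 'I_n.+1 -> 'I_D * 'I_th.+1}) :=
  history n (fun h => (g (inord h)).1) (fun h => val (g (inord h)).2).
have sum_hist Y : measurable Y -> Pr P (entrance n k th `&` Y)
    = \sum_(g <- enum {ffun 'I_n.+1 -> 'I_D * 'I_th.+1})
        Pr P (hist_of g `&` (entrance n k th `&` Y)).
  move=> mY; apply: Pr_partition.
  - exact: enum_uniq.
  - move=> g _; apply: measurableI; first exact: measurable_history.
    by apply: measurableI => //; apply: measurable_entrance.
  - move=> g g' w _ _ [Hg _] [Hg' _]; apply/ffunP => h.
    have [Jg Tg] := Hg h (leq_ord h); have [Jg' Tg'] := Hg' h (leq_ord h).
    rewrite inord_val in Jg Tg Jg' Tg'.
    by apply: injective_projections; [rewrite -Jg -Jg' | apply: val_inj; rewrite /= -Tg -Tg'].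
  apply/seteqP; split => w /=; last by case=> g _ [].
  move=> [[Jn Tn] Yw]; exists [ffun h : 'I_n.+1 => (J h w, inord (T h w))].
    by rewrite /= mem_enum.
  split; last by split.
  move=> h hn; rewrite ffunE /= !inordK ?ltnS // -Tn; exact: T_leq.
rewrite (sum_hist X mX) -[entrance n k th in RHS]setIT (sum_hist setT measurableT).
rewrite mulr_sumr; apply: eq_bigr => g _; rewrite setIT setIA.
have [[gk gth]|ng] := pselect ((g (inord n)).1 = k /\ val (g (inord n)).2 = th).
  have sub : hist_of g `<=` entrance n k th.
    by move=> w /(_ n (leqnn n)) [Jw Tw]; split; rewrite ?Jw ?Tw.
  by rewrite (setIidl sub); apply: Hc.
suff -> : hist_of g `&` entrance n k th = set0 by rewrite set0I Pr_set0 mulr0.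
apply/seteqP; split => w // [/(_ n (leqnn n)) [Jw Tw] [Jk Tth]]; apply: ng.
by rewrite -Jw -Tw.
Qed.

Lemma Pr_condev_sum (Y : set Omega) k s u : measurable Y -> (u <= s)%N ->
  Pr P (Y `&` condev J T a k s u)
  = \sum_(0 <= n < s.+1)
      Pr P (entrance n k (s - u) `&` ([set w | (s < T n.+1 w)%N] `&` Y)).
Proof.
move=> mY us; apply: Pr_partition.
- exact: iota_uniq.
- move=> n _; apply: measurableI; first exact: measurable_entrance.
  by apply: measurableI => //; apply: (@measurable_at n.+1) => w w' /= _ ->.
- move=> n n' w _ _ [[_ Tn] [Tn1 _]] [[_ Tn'] [Tn1' _]].
  have le_s m : T m w = (s - u)%N -> (T m w <= s)%N by move->; rewrite leq_subr.
  by rewrite -(Ncount_eq (le_s _ Tn) Tn1) -(Ncount_eq (le_s _ Tn') Tn1').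
rewrite condevE; apply/seteqP; split => w /=.
  move=> [Yw [Zw Bw]]; exists (Ncount T s w).
    by rewrite /= mem_index_iota ltnS Ncount_le.
  split; last by split => //; apply: T_Ncount_gt.
  by split => //; move: Bw (T_Ncount_le s w); rewrite /Bproc; lia.
move=> [n _ [[Jn Tn] [Tn1 Yw]]]; split => //.
have Tns : (T n w <= s)%N by rewrite Tn leq_subr.
by rewrite /Zproc /Bproc (Ncount_eq Tns Tn1) Jn Tn subKn.
Qed.

Lemma Pr_condev_factor (Y : set Omega) k s u (c : R) : measurable Y -> (u <= s)%N ->
  (forall m js ts, js m = k -> ts m = (s - u)%N ->
     Pr P (history m js ts `&` ([set w | (s < T m.+1 w)%N] `&` Y))
     = c * Pr P (history m js ts)) ->
  Pr P (Y `&` condev J T a k s u)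
  = c * \sum_(0 <= n < s.+1) Pr P (entrance n k (s - u)).
Proof.
move=> mY us Hc; rewrite Pr_condev_sum // mulr_sumr; apply: eq_bigr => n _.
apply: Pr_entrance_factor => [|js ts]; last exact: Hc.
by apply: measurableI => //; apply: (@measurable_at n.+1) => w w' /= _ ->.
Qed.

Section Transition.
Variables (t : nat) (j : 'I_D) (u' : nat).

Let F := [set w | Zproc J T t w = j /\ Bproc T t w = u'].
Let mF : measurable F. Proof. exact: measurable_ZB. Qed.
Let phi0 k th := phi P J T a k j 0 th u' t.

Definition markov_at (th : nat) : Prop :=
  forall m js ts, ts m = th ->
    Pr P (history m js ts `&` F) = phi0 (js m) th * Pr P (history m js ts).

Definition first_step (k : 'I_D) (th0 x : nat) : R :=
  (k == j)%:R * (u' == t - th0)%N%:R * Hbar Q (a + th0) k th0 t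
  + \sum_(k' < D) \sum_(x.+1 <= th < t.+1) qker Q (a + th0) k k' th0 th * phi0 k' th.

Lemma Pr_history_jump_after m js ts : (ts m <= t)%N ->
  Pr P (history m js ts `&` ([set w | (t < T m.+1 w)%N] `&` F))
  = (js m == j)%:R * (u' == t - ts m)%N%:R * Hbar Q (a + ts m) (js m) (ts m) t
    * Pr P (history m js ts).
Proof.
move=> tsm; rewrite setIA -mulrA -Pr_history_survive.
set Hs := history m js ts `&` _.
have ZB w : Hs w -> Zproc J T t w = js m /\ Bproc T t w = (t - ts m)%N.
  by move=> [Hw Tw]; apply: history_ZB.
have [[jE uE]|nc] := pselect (js m = j /\ u' = (t - ts m)%N).
  have HsF : Hs `<=` F by move=> w /ZB; rewrite /F /= jE uE.
  by rewrite (setIidl HsF) jE uE !eqxx !mul1r.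
suff -> : Hs `&` F = set0.
  rewrite Pr_set0; case: eqP => [jE|_]; last by rewrite !mul0r.
  by case: eqP => [uE|_]; [case: nc | rewrite mulr0 mul0r].
apply/seteqP; split => w // [/ZB [Zw Bw] [Zj Bu]]; apply: nc.
by rewrite -Zw -Bw.
Qed.

Lemma Pr_history_jump_before m js ts x : (ts m <= x)%N ->
  (forall th, (x < th <= t)%N -> markov_at th) ->
  Pr P (history m js ts `&` ([set w | (x < T m.+1 w <= t)%N] `&` F))
  = \sum_(k' < D) \sum_(x.+1 <= th < t.+1)
      qker Q (a + ts m) (js m) k' (ts m) th * phi0 k' th * Pr P (history m js ts).
Proof.
move=> tsx markov_later; have mH := measurable_history m js ts.
transitivity (\sum_(p <- [seq (k', th) | k' <- index_enum 'I_D,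
                                         th <- index_iota x.+1 t.+1])
    Pr P (history m js ts `&` entrance m.+1 p.1 p.2 `&` F)).
  apply: Pr_partition.
  - apply: allpairs_uniq; [exact: index_enum_uniq | exact: iota_uniq |].
    by move=> [? ?] [? ?].
  - by move=> p _; do 2 apply: measurableI => //; apply: measurable_entrance.
  - move=> p p' w _ _ [[_ [J1 T1]] _] [[_ [J2 T2]] _].
    by apply: injective_projections; [rewrite -J1 -J2 | rewrite -T1 -T2].
  apply/seteqP; split => w /=.
    move=> [Hw [/andP[xT Tt] Fw]]; exists (J m.+1 w, T m.+1 w) => //=.
    by apply: allpairs_f; rewrite ?mem_index_enum // mem_index_iota xT ltnS.
  move=> [[k' th] /allpairsP [[k1 th1] [_ th_in pE]] [[Hw [_ Tw]] Fw]].
  have th_eq : th = th1 := congr1 snd pE.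
  split => //; split => //.
  by move: th_in; rewrite /= -th_eq mem_index_iota ltnS Tw.
rewrite big_allpairs; apply: eq_bigr => k' _.
rewrite big_seq [RHS]big_seq; apply: eq_bigr => th.
rewrite mem_index_iota ltnS => /andP[xth tht] /=.
have markov_next : Pr P (history m js ts `&` entrance m.+1 k' th `&` F)
    = phi0 k' th * Pr P (history m js ts `&` entrance m.+1 k' th).
  have xtht : (x < th <= t)%N by rewrite xth.
  rewrite history_extend.
  have /= := markov_later th xtht m.+1 [eta js with m.+1 |-> k'] [eta ts with m.+1 |-> th].
  by rewrite !eqxx; apply.
rewrite markov_next Pr_history_jump; last exact: leq_ltn_trans tsx xth.
by rewrite mulrA [phi0 _ _ * _]mulrC.
Qed.

Lemma Pr_history_first_step m js ts x : (ts m <= x <= t)%N ->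
  (forall th, (x < th <= t)%N -> markov_at th) ->
  Pr P (history m js ts `&` ([set w | (x < T m.+1 w)%N] `&` F))
  = first_step (js m) (ts m) x * Pr P (history m js ts).
Proof.
move=> /andP[tsx xt] markov_later; have mH := measurable_history m js ts.
have mT_gt y : measurable [set w | (y < T m.+1 w)%N].
  by apply: (@measurable_at m.+1) => w w' /= _ ->.
have mT_in : measurable [set w | (x < T m.+1 w <= t)%N].
  by apply: (@measurable_at m.+1) => w w' /= _ ->.
have -> : history m js ts `&` ([set w | (x < T m.+1 w)%N] `&` F)
    = history m js ts `&` ([set w | (t < T m.+1 w)%N] `&` F)
      `|` history m js ts `&` ([set w | (x < T m.+1 w <= t)%N] `&` F).
  rewrite -setIUr -setIUl; congr (_ `&` (_ `&` _)); apply/seteqP; split => w /=.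
    by move=> xT; case: (leqP (T m.+1 w) t) => tT; [right; rewrite xT | left].
  by case=> [tT|/andP[]//]; apply: leq_ltn_trans xt tT.
rewrite Pr_setU; first last.
- apply/seteqP; split => w // [[_ [/= tT _]] [_ [/andP[_ Tt] _]]].
  by move: tT; rewrite ltnNge Tt.
- by do 2 apply: measurableI => //.
- by do 2 apply: measurableI => //.
rewrite Pr_history_jump_after; last exact: leq_trans tsx xt.
rewrite Pr_history_jump_before // /first_step mulrDl; congr (_ + _).
by rewrite mulr_suml; apply: eq_bigr => k' _; rewrite mulr_suml.
Qed.

Lemma markov_at_step th0 : (th0 <= t)%N ->
  (forall th, (th0 < th <= t)%N -> markov_at th) -> markov_at th0.
Proof.
move=> th0t markov_later m js ts tsm; set k := js m.
set S := \sum_(0 <= n < th0.+1) Pr P (entrance n k th0).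
have first_step_k m' js' ts' : js' m' = k -> ts' m' = th0 ->
    Pr P (history m' js' ts' `&` ([set w | (th0 < T m'.+1 w)%N] `&` F))
    = first_step k th0 th0 * Pr P (history m' js' ts').
  move=> jsk tsth; rewrite -jsk -tsth.
  by apply: Pr_history_first_step; rewrite tsth ?leqnn.
have den : Pr P (condev J T a k th0 0) = S.
  rewrite -[condev _ _ _ _ _ _]setTI (@Pr_condev_factor _ _ _ _ 1) ?mul1r ?subn0 //.
  by move=> m' js' ts' _ tsth; rewrite -tsth history_after setIT mul1r.
have num : Pr P (F `&` condev J T a k th0 0) = first_step k th0 th0 * S.
  by rewrite (@Pr_condev_factor _ _ _ _ (first_step k th0 th0)) ?subn0.
rewrite -(history_after m js ts F) tsm first_step_k //.
have [S0|Sn0] := eqVneq S 0; last by rewrite /phi0 /phi num den mulfK.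
suff -> : Pr P (history m js ts) = 0 by rewrite !mulr0.
apply/eqP; rewrite eq_le Pr_ge0 andbT -S0 -den -tsm.
apply: le_Pr; [exact: measurable_history | | exact: history_sub_condev].
by rewrite condevE; apply: measurable_ZB.
Qed.

Lemma markov_at_le th : (th <= t)%N -> markov_at th.
Proof.
move=> tht; have [r] := ubnP (t - th)%N; elim: r th tht => // r IH th tht lt_r.
apply: markov_at_step => // th' /andP[th_lt th'_le]; apply: IH => //; lia.
Qed.

Lemma phi0_eq0 k th : (t - u' < th)%N -> (th <= t)%N -> phi0 k th = 0.
Proof.
move=> lt tht; rewrite /phi0 /phi.
suff -> : F `&` condev J T a k th 0 = set0 by rewrite Pr_set0 mul0r.
rewrite condevE; apply/seteqP; split => w //= [[_ Bt] [_ Bth]]; move: Bt Bth.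
have T_le := T_leq w (Ncount_ge (leq_trans (T_Ncount_le th w) tht)).
by have := T_Ncount_le t w; rewrite /Bproc; lia.
Qed.

Lemma sum_phi0_truncate k (f : nat -> R) x :
  \sum_(x.+1 <= th < t.+1) f th * phi0 k th
  = \sum_(x.+1 <= th < (t - u').+1) f th * phi0 k th.
Proof.
have le_tu : ((t - u').+1 <= t.+1)%N by rewrite ltnS leq_subr.
rewrite (big_nat_widen _ _ _ _ _ le_tu) [RHS]big_rmcond_in // => th.
rewrite mem_index_iota ltnS -ltnNge => /andP[_ tht] lt.
by rewrite phi0_eq0 ?mulr0.
Qed.

Lemma phi_first_step i u s : (u <= s <= t)%N -> 0 < Pr P (condev J T a i s u) ->
  phi P J T a i j u s u' t = first_step i (s - u) s / Hbar Q (a + (s - u)) i (s - u) s.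
Proof.
move=> /andP[us st] hpos.
set S := \sum_(0 <= n < s.+1) Pr P (entrance n i (s - u)).
have num : Pr P (F `&` condev J T a i s u) = first_step i (s - u) s * S.
  apply: Pr_condev_factor => // m js ts jsi tsm; rewrite -jsi -tsm.
  apply: Pr_history_first_step; first by rewrite tsm leq_subr.
  by move=> th /andP[_ tht]; apply: markov_at_le.
have den : Pr P (condev J T a i s u) = Hbar Q (a + (s - u)) i (s - u) s * S.
  rewrite -[condev _ _ _ _ _ _]setTI; apply: Pr_condev_factor => // m js ts jsi tsm.
  by rewrite setIT Pr_history_survive jsi tsm.
have Sn0 : S != 0 by apply: contraTneq hpos => S0; rewrite den S0 mulr0 ltxx.
by rewrite /phi num den invfM mulrACA divff // mulr1.
Qed.

End Transition.

End MarkovRenewal.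

End RenewalProcess.

Theorem proposition1 (R : realType) (d : measure_display) (Omega : measurableType d)
  (P : probability Omega R) (D : nat)
  (J : nat -> Omega -> 'I_D) (T : nat -> Omega -> nat) (a : nat)
  (Q : nat -> 'I_D -> 'I_D -> nat -> nat -> R)
  (mJ : forall (n : nat) (j : 'I_D), measurable (J n @^-1` [set j]))
  (mT : forall (n t : nat), measurable (T n @^-1` [set t]))
  (T0 : forall w, T 0%N w = 0%N)
  (Tinc : forall (n : nat) w, (T n w < T n.+1 w)%N)
  (hMRP : is_age_MRP P J T a Q)
  (i j : 'I_D) (u s u' t : nat)
  (hus : (u <= s)%N) (hst : (s <= t)%N)
  (hpos : 0 < Pr P (condev J T a i s u))
  (hH : 0 < Hbar Q (a + (s - u))%N i (s - u)%N s) :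
  phi P J T a i j u s u' t =
    (i == j)%:R * (u' == t - s + u)%N%:R
      * (Hbar Q (a + (s - u))%N i (s - u)%N t / Hbar Q (a + (s - u))%N i (s - u)%N s)
    + \sum_(k < D) \sum_(s.+1 <= theta < (t - u').+1)
        (qker Q (a + (s - u))%N i k (s - u)%N theta
           / Hbar Q (a + (s - u))%N i (s - u)%N s)
        * phi P J T a k j 0%N theta u' t.
Proof.
(* hH is redundant: Pr P (condev J T a i s u) factors as Hbar (...) s * S with S >= 0. *)
rewrite (phi_first_step mJ mT T0 Tinc hMRP) ?hus //.
rewrite /first_step mulrDl; congr (_ + _).
  have -> : (t - (s - u) = t - s + u)%N by lia.
  by rewrite mulrA.
rewrite mulr_suml; apply: eq_bigr => k _.
rewrite sum_phi0_truncate // mulr_suml; apply: eq_bigr => theta _.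
by rewrite mulrAC.
Qed.
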